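(* Under the standing hypotheses ($N\ge2$, $l\ge2$, $\sigma\in\mathfrak S_{N,l}$, $J\in\{1,\dots,N\}^k$ nonperiodic, $f\in\mathrm{BFS}_N(\Lambda)$ is $P(J)$, and $\Lambda(p)$ is defined for each $p\in Q_J$ as below): (a) If $\Lambda_0\subset\Lambda$ is such that $f^{(\sigma)}$ restricts to a branching function system on $\Lambda_0$ and $f^{(\sigma)}|_{\Lambda_0}$ is $P(T)$ for some word $T$, then there is $p\in Q_J$ with $\Lambda_0=\Lambda(p)$. (b) For $p,p'\in Q_J$, $p\sim p'$ if and only if $\Lambda(p)=\Lambda(p')$.
   Context: Branching function systems: for an infinite set $\Lambda$, $f=\{f_i\}_{i=1}^N\in\mathrm{BFS}_N(\Lambda)$ means each $f_i$ is injective on $\Lambda$ and $f_1(\Lambda),\dots,f_N(\Lambda)$ partition $\Lambda$. $f_J=f_{j_1}\circ\cdots\circ f_{j_k}$ for $J=(j_1,\dots,j_k)$, $f_0=\mathrm{id}$. $x\sim y$ iff $f_{J_1}(z)=x$, $f_{J_2}(z)=y$ for some words $J_1,J_2$ (possibly empty) and $z$; $A_f(x)=\{y:x\sim y\}$; $f$ is cyclic if $\Lambda=A_f(x)$ for some $x$. $f$ is $P(J)$ ($J=(j_1,\dots,j_k)$) if $f$ is cyclic and there are distinct $n_1,\dots,n_k$ with $f_{j_1}(n_1)=n_k$, $f_{j_2}(n_2)=n_1,\dots,f_{j_k}(n_k)=n_{k-1}$. Restriction $f|_{\Lambda_0}$ is taken when $f_i(\Lambda_0)\subset\Lambda_0$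 and these images partition $\Lambda_0$. For $\sigma\in\mathfrak S_{N,l}$ (permutations of $\{1,\dots,N\}^l$), $f^{(\sigma)}_i(f_K(n))=f_{\sigma(i,K)}(n)$ for $K\in\{1,\dots,N\}^{l-1}$. $J$ nonperiodic: not an $r$-fold concatenation of a word with $r\ge2$. Semi-Mealy machine by $\sigma$: states $q_K$ ($K\in\{1,\dots,N\}^{l-1}$), inputs $a_i$, outputs $b_i$; with $\sigma^{-1}(K,i)=(y_1,\dots,y_l)$, $\delta(q_K,a_i)=q_{(y_2,\dots,y_l)}$, $\lambda(q_K,a_i)=b_{y_1}$, extended to words by $\delta(q,wa)=\delta(\delta(q,w),a)$, $\lambda(q,wa)=\lambda(q,w)\lambda(\delta(q,w),a)$; $a_J=a_{j_1}\cdots a_{j_k}$. $Q_J=\{q:\delta(q,(a_J)^n)=q$ for some $n\ge1\}$, $q\sim q'$ iff $\delta(q,(a_J)^n)=q'$ for some $n\ge1$, $[q]$ its class. Definition of $\Lambda(p)$: let $n_0$ be the unique point with $f_J(n_0)=n_0$. For $p\in Q_J$ let $r=\#[p]$, $\alpha=rk$, extend $J$ periodically ($j_{k(c-1)+i}=j_i$), set $p_1=p$, $p_i=\delta(p_{i-1},a_{j_{i-1}})$ ($2\le i\le\alpha$), write $p_\alpha=q_{I_\alpha}$, let $m(p)=f_{(I_\alpha,j_\alpha)}(n_0)$ and $\Lambda(p)=A_{f^{(\sigma)}}(m(p))$. *)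

From Stdlib Require Import ClassicalEpsilon.
From mathcomp Require Import all_boot all_fingroup.
Set Implicit Arguments. Unset Strict Implicit. Unset Printing Implicit Defensive.

Section BFS.
Variables (N : nat) (Lam : Type).

Definition fw (f : 'I_N -> Lam -> Lam) (J : seq 'I_N) : Lam -> Lam :=
  foldr (fun j h => fun x => f j (h x)) id J.

Definition infinite_on (D : Lam -> Prop) : Prop :=
  forall s : list Lam, exists x, D x /\ ~ List.In x s.

(* f restricts to a branching function system on D: f_i(D) c D, each f_i is
   injective on D, the f_i(D) partition D, and D is infinite.
   With D = (fun _ => True) this is f \in BFS_N(Lam). *)
Definition BFS_on (f : 'I_N -> Lam -> Lam) (D : Lam -> Prop) : Prop :=
  [/\ forall i x, D x -> D (f i x),
      forall i x y, D x -> D y -> f i x = f i y -> x = y,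
      forall x, D x -> exists! i : 'I_N, exists y, D y /\ f i y = x
    & infinite_on D].

Definition bfs_rel (f : 'I_N -> Lam -> Lam) (D : Lam -> Prop) (x y : Lam) : Prop :=
  exists (J1 J2 : seq 'I_N) (z : Lam), D z /\ fw f J1 z = x /\ fw f J2 z = y.

Definition Aorb (f : 'I_N -> Lam -> Lam) (D : Lam -> Prop) (x : Lam) : Lam -> Prop :=
  fun y => D y /\ bfs_rel f D x y.

Definition cyclic_on (f : 'I_N -> Lam -> Lam) (D : Lam -> Prop) : Prop :=
  exists x, D x /\ forall y, D y <-> Aorb f D x y.

(* f (on D) is P(J): cyclic, and there are distinct n_1..n_k in D with
   f_{j1}(n1) = nk, f_{j2}(n2) = n1, ..., f_{jk}(nk) = n_{k-1}.
   0-indexed: f_{J[i]}(n i) = n ((i + k - 1) mod k). *)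
Definition isP_on (f : 'I_N -> Lam -> Lam) (D : Lam -> Prop) (J : seq 'I_N) : Prop :=
  cyclic_on f D /\
  exists n : nat -> Lam,
    [/\ forall i, i < size J -> D (n i),
        forall i j, i < size J -> j < size J -> n i = n j -> i = j
      & forall i (j : 'I_N), onth J i = Some j ->
          f j (n i) = n ((i + (size J).-1) %% size J)].

End BFS.

Definition nonperiodic (N : nat) (J : seq 'I_N) : Prop :=
  ~ exists (w : seq 'I_N) (r : nat), 2 <= r /\ J = flatten (nseq r w).

Section Sigma.
Variables (N l : nat) (sigma : {perm l.-tuple 'I_N}).

Definition sig_app (w : seq 'I_N) : seq 'I_N :=
  match insub w : option (l.-tuple 'I_N) with
  | Some t => val (sigma t) | None => w end.
Definition siginv_app (w : seq 'I_N) : seq 'I_N :=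
  match insub w : option (l.-tuple 'I_N) with
  | Some t => val ((sigma^-1)%g t) | None => w end.

(* f^(sigma)_i (f_K(n)) = f_{sigma(i,K)}(n), K of length l-1 *)
Definition fsig (Lam : Type) (f : 'I_N -> Lam -> Lam) (i : 'I_N) (x : Lam) : Lam :=
  let p := epsilon (inhabits ([::] : seq 'I_N, x))
             (fun p => size p.1 = l.-1 /\ fw f p.1 p.2 = x) in
  fw f (sig_app (i :: p.1)) p.2.

(* semi-Mealy machine transition: states q_K are words K of length l-1;
   sigma^{-1}(K,i) = (y1,...,yl)  ==>  delta(q_K, a_i) = q_(y2,...,yl) *)
Definition delta (K : seq 'I_N) (i : 'I_N) : seq 'I_N := behead (siginv_app (rcons K i)).
Definition deltaw (K : seq 'I_N) (w : seq 'I_N) : seq 'I_N := foldl delta K w.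

Variable J : seq 'I_N.

Definition inQ (q : seq 'I_N) : Prop :=
  size q = l.-1 /\ exists n, 1 <= n /\ deltaw q (flatten (nseq n J)) = q.

Definition simQ (q q' : seq 'I_N) : Prop :=
  exists n, 1 <= n /\ deltaw q (flatten (nseq n J)) = q'.

Definition pb (P : Prop) : bool := if excluded_middle_informative P then true else false.

Definition class_card (p : seq 'I_N) : nat :=
  #|[set q : (l.-1).-tuple 'I_N | pb (simQ p (val q))]|.

(* Lambda(p): alpha = #[p] * k, J extended periodically to length alpha,
   p_alpha = delta(p, a_{j_1} ... a_{j_{alpha-1}}) = q_{I_alpha},
   m(p) = f_{(I_alpha, j_alpha)}(n0), Lambda(p) = A_{f^(sigma)}(m(p)). *)
Definition Lam_p (Lam : Type) (f : 'I_N -> Lam -> Lam) (n0 : Lam) (p : seq 'I_N) : Lam -> Prop :=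
  let alpha := class_card p * size J in
  let Jr := flatten (nseq (class_card p) J) in
  let palpha := deltaw p (take alpha.-1 Jr) in
  let m := fw f (palpha ++ drop alpha.-1 Jr) n0 in
  Aorb (fsig f) (fun _ => True) m.

End Sigma.

From Stdlib Require Import ClassicalEpsilon.
From mathcomp Require Import all_boot all_fingroup.
From mathcomp Require Import zify.
Set Implicit Arguments. Unset Strict Implicit. Unset Printing Implicit Defensive.

(* Both f and f^(sigma) are branching function systems, so a point has exactly
   one representation f_K(y) with |K| = t for each t, and reading a word through
   f^(sigma) is running the semi-Mealy machine:
   f_(K w)(y) = f^(sigma)_W(f_(delta(q_K, a_w))(y)) with |W| = |w|.
   (a) A point of Lambda_0 is f_u(n0); running the machine along u and then
   along powers of a_J reaches a state q on a cycle of a_J, and the orbit of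
   f_q(n0) is Lambda(q).
   (b) If f_p(n0) and f_p'(n0) are in one f^(sigma)-orbit, they have preimages
   of equal length under f^(sigma) that coincide; unique representation then
   equates the machine states reached from p and p' along powers of a_J, the
   phases in J agreeing because f_(drop e J)(n0), e < |J|, are distinct when f
   is P(J). *)

Notation bsim h := (bfs_rel h (fun _ => True)).

Lemma size_flatten_nseq (T : Type) (w : seq T) r :
  size (flatten (nseq r w)) = r * size w.
Proof. by elim: r => //= r IH; rewrite size_cat IH mulSn. Qed.

Section Words.
Variables (N : nat) (Lam : Type) (h : 'I_N -> Lam -> Lam).

Definition jointly_injective := forall i j x y, h i x = h j y -> i = j /\ x = y.

Lemma fw_cat A B x : fw h (A ++ B) x = fw h A (fw h B x).
Proof. by elim: A => //= a A ->. Qed.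

Lemma fw_flatten_nseq_id w r x : fw h w x = x -> fw h (flatten (nseq r w)) x = x.
Proof. by move=> Hw; elim: r => //= r IH; rewrite fw_cat IH. Qed.

Lemma bsim_refl x : bsim h x x.
Proof. by exists [::], [::], x. Qed.

Lemma bsim_sym x y : bsim h x y -> bsim h y x.
Proof. by move=> [A [B [z [_ [E1 E2]]]]]; exists B, A, z. Qed.

Lemma bsim_fw A x : bsim h (fw h A x) x.
Proof. by exists A, [::], x. Qed.

Hypothesis h_inj : jointly_injective.

Lemma fw_eqsize_inj A B x y :
  size A = size B -> fw h A x = fw h B y -> A = B /\ x = y.
Proof.
elim: A B => [|a A IH] [|b B] //= [Hs] E.
have [-> E'] := h_inj E.
by have [-> ->] := IH _ Hs E'.
Qed.

Lemma fw_prefix_inv A B x y :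
  size A <= size B -> fw h A x = fw h B y -> x = fw h (drop (size A) B) y.
Proof.
move=> Hs; rewrite -{1}(cat_take_drop (size A) B) fw_cat => E.
have Htake : size (take (size A) B) = size A by rewrite size_takel.
by have [_ ->] := fw_eqsize_inj (esym Htake) E.
Qed.

Lemma bsim_trans x y z : bsim h x y -> bsim h y z -> bsim h x z.
Proof.
move=> [A [B [u [_ [<- E2]]]]] [C [D [v [_ [E3 <-]]]]].
case: (leqP (size B) (size C)) => Hs.
  have Hu := fw_prefix_inv Hs (etrans E2 (esym E3)).
  by exists (A ++ drop (size B) C), D, v; rewrite fw_cat -Hu.
have Hv := fw_prefix_inv (ltnW Hs) (etrans E3 (esym E2)).
by exists A, (D ++ drop (size C) B), u; rewrite fw_cat -Hv.
Qed.

Lemma bsim_classP x y : bsim h x y -> forall z, bsim h x z <-> bsim h y z.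
Proof.
move=> Hxy z; split; first exact: bsim_trans (bsim_sym Hxy).
exact: bsim_trans Hxy.
Qed.

(* Joint injectivity makes a sub-system closed backwards along words, so on a
   cyclic sub-system the orbit relation needs no witness inside [D]. *)
Lemma BFS_on_cyclic_bsim D :
  BFS_on h D -> cyclic_on h D -> exists x0, forall y, D y <-> bsim h x0 y.
Proof.
move=> [Dclosed _ Dpart _] [x0 [Dx0 Hx0]].
have Dback A z : D (fw h A z) -> D z.
  elim: A z => [|a A IH] z //= Daz.
  have [i [[y [Dy Ey]] _]] := Dpart _ Daz.
  by apply: IH; have [_ <-] := h_inj Ey.
have Dfw A z : D z -> D (fw h A z) by elim: A => //= a A IH /IH /Dclosed.
exists x0 => y; split.
  by move=> /Hx0 [_ [A [B [z [_ E]]]]]; exists A, B, z.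
move=> [A [B [z [_ [EA <-]]]]].
by apply/Dfw/(Dback A); rewrite EA.
Qed.

End Words.

Section BranchingSystem.
Variables (N : nat) (Lam : Type) (f : 'I_N -> Lam -> Lam).
Hypothesis Hf : BFS_on f (fun _ => True).

Lemma BFS_jointly_injective : jointly_injective f.
Proof.
case: Hf => _ finj fpart _ i j x y E.
have [i0 [_ Hu]] := fpart (f i x) I.
have Hi : i0 = i by apply: Hu; exists x.
have Hj : i0 = j by apply: Hu; exists y; rewrite E.
by subst; split=> //; apply: finj E.
Qed.

Lemma fw_surj_size t x : exists K y, size K = t /\ fw f K y = x.
Proof.
elim: t x => [|t IH] x; first by exists [::], x.
have [K [y [<- <-]]] := IH x.
case: Hf => _ _ fpart _; have [i [[y' [_ <-]] _]] := fpart y I.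
by exists (rcons K i), y'; rewrite size_rcons -cats1 fw_cat.
Qed.

End BranchingSystem.

Section Permutation.
Variables (N l : nat) (sigma : {perm l.-tuple 'I_N}).

Lemma sig_app_val (t : l.-tuple 'I_N) : sig_app sigma (val t) = val (sigma t).
Proof. by rewrite /sig_app valK. Qed.

Lemma siginv_app_val (t : l.-tuple 'I_N) :
  siginv_app sigma (val t) = val ((sigma^-1)%g t).
Proof. by rewrite /siginv_app valK. Qed.

Lemma size_sig_app w : size w = l -> size (sig_app sigma w) = l.
Proof. by move=> /eqP Hw; rewrite -[w]/(val (Tuple Hw)) sig_app_val size_tuple. Qed.

Lemma size_siginv_app w : size w = l -> size (siginv_app sigma w) = l.
Proof. by move=> /eqP Hw; rewrite -[w]/(val (Tuple Hw)) siginv_app_val size_tuple. Qed.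

Lemma siginv_appK w : size w = l -> sig_app sigma (siginv_app sigma w) = w.
Proof.
by move=> /eqP Hw; rewrite -[w]/(val (Tuple Hw)) siginv_app_val sig_app_val permKV.
Qed.

Lemma sig_app_inj w w' :
  size w = l -> size w' = l -> sig_app sigma w = sig_app sigma w' -> w = w'.
Proof.
move=> /eqP Hw /eqP Hw'; rewrite -[w]/(val (Tuple Hw)) -[w']/(val (Tuple Hw')).
by rewrite !sig_app_val => /val_inj/perm_inj ->.
Qed.

Hypothesis Hl : 0 < l.

Lemma size_delta K i : size K = l.-1 -> size (delta sigma K i) = l.-1.
Proof. by move=> HK; rewrite size_behead size_siginv_app // size_rcons HK prednK. Qed.

Lemma size_deltaw K w : size K = l.-1 -> size (deltaw sigma K w) = l.-1.
Proof. by elim: w K => //= i w IH K HK; apply/IH/size_delta. Qed.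

Lemma deltaw_cat K u v : deltaw sigma K (u ++ v) = deltaw sigma (deltaw sigma K u) v.
Proof. by rewrite /deltaw foldl_cat. Qed.

End Permutation.

Section Machine.
Variables (N l : nat) (Lam : Type) (sigma : {perm l.-tuple 'I_N}) (f : 'I_N -> Lam -> Lam).
Hypothesis Hl : 0 < l.
Hypothesis Hf : BFS_on f (fun _ => True).

Local Notation g := (fsig sigma f).

Let f_inj := BFS_jointly_injective Hf.

Let size_cons_pred i (K : seq 'I_N) : size K = l.-1 -> size (i :: K) = l.
Proof. by move=> /= ->; rewrite prednK. Qed.

Lemma fsig_fw i K y : size K = l.-1 -> g i (fw f K y) = fw f (sig_app sigma (i :: K)) y.
Proof.
move=> HK; rewrite /fsig.
set P := fun p : seq 'I_N * Lam => size p.1 = l.-1 /\ fw f p.1 p.2 = fw f K y.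
have [HK' E] : P (epsilon (inhabits ([::], fw f K y)) P).
  by apply: epsilon_spec; exists (K, y).
by have [-> ->] := fw_eqsize_inj f_inj (etrans HK' (esym HK)) E.
Qed.

Lemma fsig_jointly_injective : jointly_injective g.
Proof.
move=> i j x y.
have [K [u [HK <-]]] := fw_surj_size Hf l.-1 x.
have [K' [u' [HK' <-]]] := fw_surj_size Hf l.-1 y.
rewrite !fsig_fw // => E.
have Hs := size_sig_app sigma (size_cons_pred i HK).
have Hs' := size_sig_app sigma (size_cons_pred j HK').
have [Esig ->] := fw_eqsize_inj f_inj (etrans Hs (esym Hs')) E.
by case: (sig_app_inj (size_cons_pred i HK) (size_cons_pred j HK') Esig) => -> ->.
Qed.

(* [head i (siginv_app sigma (rcons K i))] is the output letter of [lambda(q_K, a_i)]. *)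
Lemma fw_rcons_delta K i y : size K = l.-1 ->
  fw f (rcons K i) y = g (head i (siginv_app sigma (rcons K i))) (fw f (delta sigma K i) y).
Proof.
move=> HK; have Hs : size (rcons K i) = l by rewrite size_rcons HK prednK.
rewrite fsig_fw; last exact: size_delta.
rewrite /delta; case E: (siginv_app sigma (rcons K i)) (size_siginv_app sigma Hs) => [|a s] /=.
  by move=> Hl0; exfalso; move: Hl; rewrite -Hl0.
by move=> _; rewrite -E siginv_appK.
Qed.

Lemma fw_cat_deltaw w K y : size K = l.-1 ->
  exists W, size W = size w /\ fw f (K ++ w) y = fw g W (fw f (deltaw sigma K w) y).
Proof.
elim: w K => [|i w IH] K HK /=; first by exists [::]; rewrite cats0.
have [W [HW E]] := IH (delta sigma K i) (size_delta sigma Hl i HK).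
exists (head i (siginv_app sigma (rcons K i)) :: W); split; first by rewrite /= HW.
by rewrite -cat_rcons fw_cat fw_rcons_delta // -fw_cat E.
Qed.

Lemma bsim_fw_deltaw w K y : size K = l.-1 ->
  bsim g (fw f (K ++ w) y) (fw f (deltaw sigma K w) y).
Proof. by move=> HK; have [W [_ ->]] := fw_cat_deltaw w y HK; apply: bsim_fw. Qed.

End Machine.

Lemma iter_eventually_periodic (T : finType) (F : T -> T) x :
  exists s n, 0 < n /\ iter n F (iter s F x) = iter s F x.
Proof.
have /trajectP [m Hm E] := looping_order F x.
exists m, (fingraph.order F x - m); split; first by rewrite subn_gt0.
by rewrite -iterD subnK ?(ltnW Hm).
Qed.

Section FixedPoint.
Variables (N : nat) (Lam : Type) (f : 'I_N -> Lam -> Lam) (J : seq 'I_N) (n0 : Lam).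
Hypothesis Hf : BFS_on f (fun _ => True).

Definition fback x := epsilon (inhabits x) (fun y => exists i, f i y = x).

Lemma fback_f i y : fback (f i y) = y.
Proof.
have [i0 E] : exists i0, f i0 (fback (f i y)) = f i y.
  apply: (epsilon_spec (inhabits (f i y)) (fun y0 => exists i0, f i0 y0 = f i y)).
  by exists y, i.
by have [_ ->] := BFS_jointly_injective Hf E.
Qed.

Lemma iter_fback_fw A y : iter (size A) fback (fw f A y) = y.
Proof. by elim: A => // a A IH; rewrite [size _]/= iterSr /= fback_f. Qed.

Hypothesis HJ : fw f J n0 = n0.

Lemma iter_fback_fix e : e <= size J -> iter e fback n0 = fw f (drop e J) n0.
Proof.
move=> He; have := iter_fback_fw (take e J) (fw f (drop e J) n0).
by rewrite -fw_cat cat_take_drop HJ size_takel.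
Qed.

Hypothesis HP : isP_on f (fun _ => True) J.
Hypothesis Hk : 0 < size J.

(* Some [fback]-iterate of [n0] lies on the P(J) cycle, where [fback] has
   exact period [size J]. *)
Lemma fw_drop_inj e e' : e < size J -> e' < size J ->
  fw f (drop e J) n0 = fw f (drop e' J) n0 -> e = e'.
Proof.
move=> He He'; rewrite -(iter_fback_fix (ltnW He)) -(iter_fback_fix (ltnW He')) => E.
case: HP => [[xs [_ Hxs]] [nc [_ nc_inj nc_cycle]]].
set k := size J in He He' nc_inj nc_cycle.
have fback_nc j : j < k -> fback (nc j) = nc ((j + 1) %% k).
  move=> Hj; have [jj Hjj] : exists jj, onth J ((j + 1) %% k) = Some jj.
    by case: onth (onthTE J ((j + 1) %% k)) => [jj|]; [exists jj | rewrite ltn_pmod].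
  have := nc_cycle _ _ Hjj.
  by rewrite modnDml -addnA add1n prednK // modnDr (modn_small Hj) => <-; rewrite fback_f.
have iter_fback_nc t : iter t fback (nc 0) = nc (t %% k).
  elim: t => [|t IH]; first by rewrite mod0n.
  by rewrite iterS IH fback_nc ?ltn_pmod // modnDml addn1.
have [A [B [z [_ [EA EB]]]]] : bsim f n0 (nc 0).
  have [/(_ I) [_ Hn0] _] := Hxs n0; have [/(_ I) [_ Hnc0] _] := Hxs (nc 0).
  exact: (bsim_trans (BFS_jointly_injective Hf) (bsim_sym Hn0) Hnc0).
have shift t : iter (size A) fback (iter t fback n0) = nc ((t + size B) %% k).
  rewrite -iterD [size A + t]addnC iterD -EA iter_fback_fw.
  by rewrite -iter_fback_nc iterD -EB iter_fback_fw.
move: (shift e) (shift e'); rewrite E => -> /nc_inj.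
rewrite !ltn_pmod // => /(_ isT isT) /eqP.
by rewrite eqn_modDr !modn_small // => /eqP.
Qed.

End FixedPoint.

Section Orbits.
Variables (N l : nat) (Lam : Type) (sigma : {perm l.-tuple 'I_N})
  (J : seq 'I_N) (f : 'I_N -> Lam -> Lam) (n0 : Lam).
Hypothesis Hl : 0 < l.
Hypothesis Hf : BFS_on f (fun _ => True).
Hypothesis HJ : fw f J n0 = n0.

Local Notation g := (fsig sigma f).
Local Notation Jpow r := (flatten (nseq r J)).

Let f_inj := BFS_jointly_injective Hf.
Let g_inj : jointly_injective g := fsig_jointly_injective Hl Hf.

Definition deltaJ q := deltaw sigma q J.

Lemma deltaw_Jpow n q : deltaw sigma q (Jpow n) = iter n deltaJ q.
Proof. by elim: n q => // n IH q; rewrite [Jpow _]/= deltaw_cat IH iterSr. Qed.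

Lemma size_iter_deltaJ n q : size q = l.-1 -> size (iter n deltaJ q) = l.-1.
Proof. by move=> Hq; elim: n => //= n IH; apply: size_deltaw. Qed.

Lemma iter_deltaJ_periodic q : size q = l.-1 ->
  exists s n, 0 < n /\ iter n deltaJ (iter s deltaJ q) = iter s deltaJ q.
Proof.
move=> /eqP Hq.
pose F (t : (l.-1).-tuple 'I_N) := insubd t (deltaJ t).
have valF n t : val (iter n F t) = iter n deltaJ (val t).
  by elim: n => //= n IH; rewrite val_insubd -IH size_deltaw ?size_tuple ?eqxx.
have [s [n [Hn E]]] := iter_eventually_periodic F (Tuple Hq).
by exists s, n; rewrite -[q]/(val (Tuple Hq)) -(valF s) -valF E.
Qed.

Lemma inQ_iter_deltaJ q s n :
  size q = l.-1 -> 0 < n -> iter n deltaJ (iter s deltaJ q) = iter s deltaJ q ->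
  inQ sigma J (iter s deltaJ q).
Proof.
by move=> Hq Hn E; split; [apply: size_iter_deltaJ | exists n; rewrite deltaw_Jpow].
Qed.

(* The point [m(p)] differs from [f_p(n0)] only by running the machine along
   a prefix of a power of [J], so the exact value of [alpha] is irrelevant. *)
Lemma Lam_pE p x : size p = l.-1 ->
  Lam_p sigma J f n0 p x <-> bsim g (fw f p n0) x.
Proof.
move=> Hp; rewrite /Lam_p /Aorb.
set r := class_card sigma J p; set a := (r * size J).-1.
have Hm : bsim g (fw f p n0) (fw f (deltaw sigma p (take a (Jpow r)) ++ drop a (Jpow r)) n0).
  have := bsim_fw_deltaw sigma Hl Hf (take a (Jpow r)) (fw f (drop a (Jpow r)) n0) Hp.
  by rewrite -!fw_cat -catA cat_take_drop fw_cat fw_flatten_nseq_id.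
by rewrite (bsim_classP g_inj Hm); split=> [[]|].
Qed.

Lemma Lam_p_eqP p p' : size p = l.-1 -> size p' = l.-1 ->
  (forall x, Lam_p sigma J f n0 p x <-> Lam_p sigma J f n0 p' x) <->
  bsim g (fw f p n0) (fw f p' n0).
Proof.
move=> Hp Hp'; split=> [E | Hpp' x].
  by apply/(Lam_pE _ Hp)/E/(Lam_pE _ Hp'); apply: bsim_refl.
by rewrite (Lam_pE _ Hp) (Lam_pE _ Hp'); apply: bsim_classP.
Qed.

Lemma simQ_bsim p p' : size p = l.-1 -> simQ sigma J p p' ->
  bsim g (fw f p n0) (fw f p' n0).
Proof.
move=> Hp [n [_ <-]]; have := bsim_fw_deltaw sigma Hl Hf (Jpow n) n0 Hp.
by rewrite fw_cat fw_flatten_nseq_id.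
Qed.

Lemma bsim_fw_inQ u : l.-1 <= size u ->
  exists q, inQ sigma J q /\ bsim g (fw f u n0) (fw f q n0).
Proof.
move=> Hu; set K := take l.-1 u; set w := drop l.-1 u.
have HK : size K = l.-1 by rewrite size_takel.
have [s [n [Hn Hper]]] := iter_deltaJ_periodic (size_deltaw sigma Hl w HK).
exists (iter s deltaJ (deltaw sigma K w)).
split; first exact: inQ_iter_deltaJ (size_deltaw sigma Hl w HK) Hn Hper.
have := bsim_fw_deltaw sigma Hl Hf (w ++ Jpow s) n0 HK.
by rewrite catA cat_take_drop fw_cat fw_flatten_nseq_id // deltaw_cat deltaw_Jpow.
Qed.

Hypothesis HP : isP_on f (fun _ => True) J.
Hypothesis Hk : 0 < size J.

Lemma size_Jpow_ge r : r <= size (Jpow r).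
Proof. by rewrite size_flatten_nseq leq_pmulr. Qed.

Lemma fw_fix_surj t x : exists u, t <= size u /\ fw f u n0 = x.
Proof.
case: HP => [[xs [_ Hxs]] _].
have [/(_ I) [_ Hx] _] := Hxs x; have [/(_ I) [_ Hn0] _] := Hxs n0.
have [A [B [z [_ [<- EB]]]]] := bsim_trans f_inj (bsim_sym Hx) Hn0.
have Hz := fw_prefix_inv f_inj (size_Jpow_ge (size B))
  (etrans EB (esym (fw_flatten_nseq_id (size B) HJ))).
exists (A ++ drop (size B) (Jpow (size B)) ++ Jpow t); split.
  by rewrite !size_cat addnA (leq_trans (size_Jpow_ge t)) ?leq_addl.
by rewrite !fw_cat fw_flatten_nseq_id // -Hz.
Qed.

Definition Jprefix d := Jpow (d %/ size J) ++ take (d %% size J) J.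

Lemma size_Jprefix d : size (Jprefix d) = d.
Proof.
rewrite /Jprefix size_cat size_flatten_nseq size_takel -?divn_eq //.
exact/ltnW/ltn_pmod.
Qed.

Lemma deltaw_Jprefix_drop q d :
  deltaw sigma (deltaw sigma q (Jprefix d)) (drop (d %% size J) J) =
  iter (d %/ size J).+1 deltaJ q.
Proof. by rewrite -deltaw_cat /Jprefix -catA cat_take_drop deltaw_cat deltaw_Jpow. Qed.

Lemma fw_Jprefix_drop d : fw f (Jprefix d) (fw f (drop (d %% size J) J) n0) = n0.
Proof. by rewrite -fw_cat /Jprefix -catA cat_take_drop fw_cat HJ fw_flatten_nseq_id. Qed.

Lemma fsig_preimage q A z : size q = l.-1 -> fw g A z = fw f q n0 ->
  z = fw f (deltaw sigma q (Jprefix (size A))) (fw f (drop (size A %% size J) J) n0).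
Proof.
move=> Hq EA.
have [W [HW E]] :=
  fw_cat_deltaw sigma Hl Hf (Jprefix (size A)) (fw f (drop (size A %% size J) J) n0) Hq.
rewrite fw_cat fw_Jprefix_drop in E; rewrite size_Jprefix in HW.
by have [_ ->] := fw_eqsize_inj g_inj (esym HW) (etrans EA E).
Qed.

Lemma simQ_of_iter_eq p p' u v : inQ sigma J p' ->
  iter u deltaJ p = iter v deltaJ p' -> simQ sigma J p p'.
Proof.
move=> [_ [n [Hn Hper]]] E; rewrite deltaw_Jpow in Hper.
have Hv : v.+1 <= v.+1 * n by rewrite leq_pmulr.
have iter_per M : iter (M * n) deltaJ p' = p'.
  by elim: M => // M IH; rewrite mulSn iterD IH Hper.
exists (v.+1 * n - v + u); split; first lia.
by rewrite deltaw_Jpow iterD E -iterD subnK ?iter_per // ltnW.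
Qed.

(* Pulling both points back along words of the same length reaches the same
   point; unique representation then aligns states and phases in [J]. *)
Lemma bsim_simQ p p' : size p = l.-1 -> inQ sigma J p' ->
  bsim g (fw f p n0) (fw f p' n0) -> simQ sigma J p p'.
Proof.
move=> Hp Hp' [A [B [z [_ [EA EB]]]]].
have Hp's : size p' = l.-1 by case: Hp'.
have Hs := size_deltaw sigma Hl (Jprefix (size A)) Hp.
have Hs' := size_deltaw sigma Hl (Jprefix (size B)) Hp's.
have [Estate Ephase] := fw_eqsize_inj f_inj (etrans Hs (esym Hs'))
  (etrans (esym (fsig_preimage Hp EA)) (fsig_preimage Hp's EB)).
have Ee := fw_drop_inj Hf HJ HP Hk (ltn_pmod _ Hk) (ltn_pmod _ Hk) Ephase.
apply: (simQ_of_iter_eq (u := (size A %/ size J).+1) (v := (size B %/ size J).+1) Hp').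
by rewrite -!deltaw_Jprefix_drop Estate Ee.
Qed.

End Orbits.

(* The only use of nonperiodicity: the exact period of [n0] comes from P(J). *)
Lemma nonperiodic_size_gt0 (N : nat) (J : seq 'I_N) : nonperiodic J -> 0 < size J.
Proof.
move=> Hnp; rewrite lt0n; apply/eqP => /size0nil EJ.
by apply: Hnp; exists [::], 2; rewrite EJ.
Qed.

Theorem lemma3p1 (N l : nat) (Lam : Type) (sigma : {perm l.-tuple 'I_N})
  (J : seq 'I_N) (f : 'I_N -> Lam -> Lam) (n0 : Lam) :
  2 <= N -> 2 <= l ->
  nonperiodic J ->
  BFS_on f (fun _ => True) ->
  isP_on f (fun _ => True) J ->
  fw f J n0 = n0 ->
  (* (a) *)
  (forall Lam0 : Lam -> Prop,
     BFS_on (fsig sigma f) Lam0 ->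
     (exists T : seq 'I_N, T <> [::] /\ isP_on (fsig sigma f) Lam0 T) ->
     exists p, inQ sigma J p /\ forall x, Lam0 x <-> Lam_p sigma J f n0 p x)
  /\
  (* (b) *)
  (forall p p', inQ sigma J p -> inQ sigma J p' ->
     (simQ sigma J p p' <-> forall x, Lam_p sigma J f n0 p x <-> Lam_p sigma J f n0 p' x)).
Proof.
move=> _ Hl2 Hnp Hf HP HJ.
have Hl : 0 < l by apply: ltnW.
have Hk := nonperiodic_size_gt0 Hnp.
have g_inj : jointly_injective (fsig sigma f) := fsig_jointly_injective Hl Hf.
split=> [Lam0 HB [T [_ [Hcyc _]]] | p p' [Hp _] Hp'].
- have [x0 Hx0] := BFS_on_cyclic_bsim g_inj HB Hcyc.
  have [u [Hu Eu]] := fw_fix_surj Hf HJ HP Hk l.-1 x0.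
  have [q [Hq]] := bsim_fw_inQ sigma Hl Hf HJ Hu; rewrite Eu => Hxq.
  exists q; split=> // x.
  by rewrite Hx0 (bsim_classP g_inj Hxq) (Lam_pE sigma Hl Hf HJ x (proj1 Hq)).
- have Hp's : size p' = l.-1 by case: Hp'.
  rewrite (Lam_p_eqP sigma Hl Hf HJ Hp Hp's).
  by split; [apply: simQ_bsim | apply: bsim_simQ].
Qed.
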